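(* Let $s\ge 1$, $q=4^{2s}$, and let $\theta$ be the automorphism of $F_q$ given by $\theta(a)=a^{4^s}$. Let $h(x)\in F_q[x;\theta]$ be a palindromic polynomial of degree $t$. (1) If $t$ is odd, then its skew reciprocal polynomial $h^R(x)$ is a $\theta$-palindromic polynomial. (2) If $t$ is even, then $h^R(x)$ is also a palindromic polynomial.
   Context: $F_q[x;\theta]$ is the skew polynomial ring: polynomials $\sum a_ix^i$ with $a_i\in F_q$, usual addition, and multiplication determined by $xa=\theta(a)x$ for $a\in F_q$. For $f(x)=\sum_{i=0}^t a_ix^i$ of degree $t$, the skew reciprocal polynomial is $f^R(x)=\sum_{i=0}^t x^ia_{t-i}=\sum_{i=0}^t\theta^i(a_{t-i})x^i$. A polynomial $f(x)=a_0+\dots+a_tx^t$ of degree $t$ is palindromic if $a_i=a_{t-i}$ for all $i$, and $\theta$-palindromic if $a_i=\theta(a_{t-i})$ for all $i$. *)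

From mathcomp Require Import all_boot all_order all_algebra.
Set Implicit Arguments. Unset Strict Implicit. Unset Printing Implicit Defensive.
Import GRing.Theory.
Local Open Scope ring_scope.

(* Elements of the skew polynomial ring F[x;theta] are represented by their
   coefficient sequences, stored as {poly F}: f = \sum_i f`_i x^i (coefficients
   on the left).  Only the additive structure / coefficients are used here;
   the skew multiplication is not needed for the statement. *)

Definition theta_s (F : finFieldType) (s : nat) (a : F) : F := a ^+ (4 ^ s).

Definition skew_reciprocal (F : fieldType) (theta : F -> F) (f : {poly F})
  : {poly F} :=
  let t := (size f).-1 in \poly_(i < t.+1) iter i theta f`_(t - i).

Definition palindromic (F : fieldType) (f : {poly F}) : Prop :=
  f != 0 /\ forall i, (i <= (size f).-1)%N -> f`_i = f`_((size f).-1 - i).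

Definition theta_palindromic (F : fieldType) (theta : F -> F) (f : {poly F})
  : Prop :=
  f != 0 /\
  forall i, (i <= (size f).-1)%N -> f`_i = theta f`_((size f).-1 - i).

From mathcomp Require Import all_boot all_order all_algebra.
From mathcomp Require Import finfield.
Import GRing.Theory.
Local Open Scope ring_scope.

(* Since q = (4^s)^2, theta is an involution of F_q, so theta^i only depends on
   the parity of i.  For a palindromic h of degree t the i-th coefficient of
   h^R is theta^i(h_i), hence the coefficients of h^R at i and t - i differ by
   theta^t, which is theta for odd t and the identity for even t. *)

Lemma iter_involutive (T : Type) (f : T -> T) n x :
  involutive f -> iter n f x = if odd n then f x else x.
Proof.
by move=> fK; elim: n => [|n IHn] //=; rewrite IHn; case: (odd n); rewrite /= ?fK.
Qed.

Section FrobeniusPower.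

Variables (F : finFieldType) (s : nat).

Lemma theta_s_involutive : #|F| = (4 ^ (2 * s))%N -> involutive (@theta_s F s).
Proof.
move=> cardF a; rewrite /theta_s -exprM -expnD addnn -muln2 mulnC -cardF.
exact: expf_card.
Qed.

Lemma theta_s_eq0 (a : F) : (theta_s s a == 0) = (a == 0).
Proof. by rewrite /theta_s expf_eq0 expn_gt0. Qed.

End FrobeniusPower.

Section SkewReciprocal.

Variables (F : fieldType) (theta : F -> F).
Implicit Types f : {poly F}.

Lemma coef_skew_reciprocal f i :
  (skew_reciprocal theta f)`_i =
  if (i <= (size f).-1)%N then iter i theta f`_((size f).-1 - i) else 0.
Proof. by rewrite /skew_reciprocal coef_poly ltnS. Qed.

Lemma palindromic_coef0 f : palindromic f -> f`_0 = lead_coef f.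
Proof. by case=> _ fpal; rewrite fpal // subn0 lead_coefE. Qed.

Lemma size_skew_reciprocal_palindromic f :
  (forall a, a != 0 -> theta a != 0) -> palindromic f ->
  size (skew_reciprocal theta f) = size f.
Proof.
move=> theta_neq0 fpal; have f_neq0 : f != 0 by case: fpal.
rewrite /skew_reciprocal size_poly_eq ?prednK ?size_poly_gt0 // subnn.
rewrite -lead_coef_eq0 in f_neq0; rewrite palindromic_coef0 //.
by elim: (size f).-1 => [|n IHn] //=; apply: theta_neq0.
Qed.

Lemma coef_skew_reciprocal_palindromic f i :
  involutive theta -> palindromic f -> (i <= (size f).-1)%N ->
  (skew_reciprocal theta f)`_i =
  iter (size f).-1 theta (skew_reciprocal theta f)`_((size f).-1 - i).
Proof.
move=> thetaK [_ fpal] le_it; rewrite !coef_skew_reciprocal le_it leq_subr.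
rewrite subKn // -(fpal i le_it) -iterD !iter_involutive //.
by rewrite oddD oddB // addKb.
Qed.

End SkewReciprocal.

Theorem theorem5 (s : nat) (F : finFieldType) (hs : (1 <= s)%N)
  (hq : #|F| = (4 ^ (2 * s))%N) (h : {poly F}) (t : nat)
  (ht : size h = t.+1) (hpal : palindromic h) :
  (odd t -> theta_palindromic (theta_s s) (skew_reciprocal (theta_s s) h)) /\
  (~~ odd t -> palindromic (skew_reciprocal (theta_s s) h)).
Proof.
have thetaK := @theta_s_involutive F s hq.
set R := skew_reciprocal _ h.
have sizeR : size R = t.+1.
  rewrite size_skew_reciprocal_palindromic ?ht // => a.
  by rewrite theta_s_eq0.
have R_neq0 : R != 0 by rewrite -size_poly_eq0 sizeR.
have coefR i : (i <= t)%N -> R`_i = iter t (theta_s s) R`_(t - i).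
  by rewrite -[t]/(t.+1.-1) -ht; exact: coef_skew_reciprocal_palindromic.
rewrite /theta_palindromic /palindromic sizeR /=.
split=> [odd_t | even_t]; split=> // i /coefR ->.
  by rewrite iter_involutive // odd_t.
by rewrite iter_involutive // (negbTE even_t).
Qed.
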